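(* Let $I\subset\mathbb{R}$ be an open interval, $n\in\mathbb{N}$, $x\in C^{n+1}(I)$, $\kappa,\mu\in\,]-1,+\infty[$, $t_0\in I$ and $T>0$. Set $C_{\beta T}^{\mu,\kappa}=\beta T\,\frac{\kappa+n+1}{\mu+\kappa+2n+2}$ for $\beta\in\{-1,1\}$, and $$I_{n+1}^+=\inf_{t_0<\theta<t_0+T}x^{(n+1)}(\theta),\quad S_{n+1}^+=\sup_{t_0<\theta<t_0+T}x^{(n+1)}(\theta),$$ $$I_{n+1}^-=\inf_{t_0-T<\theta<t_0}x^{(n+1)}(\theta),\quad S_{n+1}^-=\sup_{t_0-T<\theta<t_0}x^{(n+1)}(\theta).$$ If $t_0+T\in I$, then $C_T^{\mu,\kappa}I_{n+1}^+\le e_{R_n,T}^{\mu,\kappa}(t_0)\le C_T^{\mu,\kappa}S_{n+1}^+$; if $t_0-T\in I$, then $C_{-T}^{\mu,\kappa}S_{n+1}^-\le e_{R_n,-T}^{\mu,\kappa}(t_0)\le C_{-T}^{\mu,\kappa}I_{n+1}^-$.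
   Context: For $a,b>-1$ let $w^{a,b}(t)=t^{b}(1-t)^{a}$ on $(0,1)$ and $P_k^{a,b}(t)=\sum_{s=0}^{k}\binom{k+a}{s}\binom{k+b}{k-s}(t-1)^{k-s}t^{s}$ (Jacobi polynomial on $[0,1]$); $B(\cdot,\cdot)$ is the Beta function. For $\beta\in\{-1,1\}$ with $t_0+\beta T\in I$, the minimal Jacobi estimator of $x^{(n)}(t_0)$ applied to the noise-free signal $x$ is $$\hat D_{\beta T}^{\mu,\kappa}x^{(n)}(t_0)=\frac{n!}{(\beta T)^{n}B(\kappa+n+1,\mu+n+1)}\int_0^1 w^{\mu,\kappa}(\tau)P_n^{\mu,\kappa}(\tau)\,x(t_0+\beta T\tau)\,d\tau,$$ and its bias term error is $e_{R_n,\beta T}^{\mu,\kappa}(t_0)=\hat D_{\beta T}^{\mu,\kappa}x^{(n)}(t_0)-x^{(n)}(t_0)$. *)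

From Stdlib Require Import Reals Arith.
From Coquelicot Require Import Coquelicot.
Open Scope R_scope.

Definition in_open_interval (a b : Rbar) (t : R) : Prop :=
  Rbar_lt a t /\ Rbar_lt t b.

Definition Cn_on (m : nat) (a b : Rbar) (x : R -> R) : Prop :=
  (forall k, (k <= m)%nat -> forall t, in_open_interval a b t -> ex_derive_n x k t)
  /\ (forall t, in_open_interval a b t -> continuous (Derive_n x m) t).

Fixpoint gbinom (r : R) (s : nat) : R :=
  match s with
  | O => 1
  | S s' => gbinom r s' * (r - INR s') / INR (S s')
  end.

Definition jac_weight (a b t : R) : R := Rpower t b * Rpower (1 - t) a.

Definition jacobiP (k : nat) (a b t : R) : R :=
  sum_f_R0 (fun s => gbinom (INR k + a) s * gbinom (INR k + b) (k - s)
                     * (t - 1) ^ (k - s) * t ^ s) k.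

Definition Beta (p q : R) : R :=
  RInt_gen (fun t => Rpower t (p - 1) * Rpower (1 - t) (q - 1))
           (at_right 0) (at_left 1).

(* minimal Jacobi estimator of x^(n)(t0), with h = beta*T *)
Definition jacobi_estimator (n : nat) (mu kappa h t0 : R) (x : R -> R) : R :=
  INR (Factorial.fact n) / (h ^ n * Beta (kappa + INR n + 1) (mu + INR n + 1))
  * RInt_gen (fun tau => jac_weight mu kappa tau * jacobiP n mu kappa tau
                         * x (t0 + h * tau))
             (at_right 0) (at_left 1).

Definition bias_error (n : nat) (mu kappa h t0 : R) (x : R -> R) : R :=
  jacobi_estimator n mu kappa h t0 x - Derive_n x n t0.

Definition Ccoef (n : nat) (mu kappa h : R) : R :=
  h * (kappa + INR n + 1) / (mu + kappa + 2 * INR n + 2).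

Definition inf_on (f : R -> R) (l r : R) : Rbar :=
  Glb_Rbar (fun y => exists th, l < th < r /\ y = f th).
Definition sup_on (f : R -> R) (l r : R) : Rbar :=
  Lub_Rbar (fun y => exists th, l < th < r /\ y = f th).

(* Rodrigues' formula writes the kernel w^{mu,kappa} P_n, up to the factor (-1)^n n!, as the n-th
   derivative of tau^(n+kappa) (1-tau)^(n+mu), whose first n-1 derivatives vanish at both ends
   of (0,1).  Integrating n times by parts turns the estimator into the mean of
   tau |-> x^(n)(t0 + beta T tau) for the Beta weight tau^(n+kappa) (1-tau)^(n+mu).  By the mean
   value theorem x^(n)(t0 + beta T tau) - x^(n)(t0) = beta T tau x^(n+1)(xi) with xi in the window,
   so the bias lies between beta T times the inf and the sup of x^(n+1), multiplied by the Beta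
   mean of tau, which is (n+kappa+1)/(2n+kappa+mu+2). *)

From Stdlib Require Import Reals Lra Lia Psatz.
From Coquelicot Require Import Coquelicot.
Open Scope R_scope.

Lemma ball_R (x e y : R) : ball x e y <-> Rabs (y - x) < e.
Proof. reflexivity. Qed.

Lemma continuous_Rmult (f g : R -> R) t :
  continuous f t -> continuous g t -> continuous (fun s => f s * g s) t.
Proof. exact (continuous_mult f g t). Qed.

Lemma continuous_Rplus (f g : R -> R) t :
  continuous f t -> continuous g t -> continuous (fun s => f s + g s) t.
Proof. exact (continuous_plus f g t). Qed.

Lemma continuous_Rminus (f g : R -> R) t :
  continuous f t -> continuous g t -> continuous (fun s => f s - g s) t.
Proof. exact (continuous_minus f g t). Qed.

Lemma continuous_Rconst (c t : R) : continuous (fun _ : R => c) t.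
Proof. exact (continuous_const (U:=R_UniformSpace) (V:=R_UniformSpace) c t). Qed.

Lemma continuous_Rid (t : R) : continuous (fun s : R => s) t.
Proof. exact (continuous_id (U:=R_UniformSpace) t). Qed.

Lemma continuous_of_is_derive (f : R -> R) t l : is_derive f t l -> continuous f t.
Proof. intros H; apply (ex_derive_continuous f); exists l; exact H. Qed.

Lemma is_derive_Rmult (f g : R -> R) t df dg : is_derive f t df -> is_derive g t dg ->
  is_derive (fun s => f s * g s) t (df * g t + f t * dg).
Proof. intros Hf Hg; apply (is_derive_mult f g t df dg Hf Hg), Rmult_comm. Qed.

Lemma is_derive_sum_f_R0 (f : nat -> R -> R) (df : nat -> R) n t :
  (forall k, (k <= n)%nat -> is_derive (f k) t (df k)) ->
  is_derive (fun s => sum_f_R0 (fun k => f k s) n) t (sum_f_R0 df n).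
Proof.
  induction n as [|n IH]; intros H; simpl.
  - apply H; lia.
  - apply (is_derive_plus (fun s => sum_f_R0 (fun k => f k s) n) (f (S n)));
      [apply IH; intros; apply H|apply H]; lia.
Qed.

Lemma filterlim_Rmult {F} {FF : Filter F} (f g : R -> R) l1 l2 :
  filterlim f F (locally l1) -> filterlim g F (locally l2) ->
  filterlim (fun t => f t * g t) F (locally (l1 * l2)).
Proof.
  intros Hf Hg. apply (filterlim_comp_2 f g Rmult Hf Hg).
  exact (filterlim_mult (K:=R_AbsRing) l1 l2).
Qed.

Lemma filterlim_Rmult_0_r {F} {FF : Filter F} (f g : R -> R) l :
  filterlim f F (locally l) -> filterlim g F (locally 0) -> filterlim (fun t => f t * g t) F (locally 0).
Proof. intros Hf Hg. rewrite <- (Rmult_0_r l). apply filterlim_Rmult; assumption. Qed.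

Lemma filterlim_Rmult_0_l {F} {FF : Filter F} (f g : R -> R) l :
  filterlim f F (locally 0) -> filterlim g F (locally l) -> filterlim (fun t => f t * g t) F (locally 0).
Proof. intros Hf Hg. rewrite <- (Rmult_0_l l). apply filterlim_Rmult; assumption. Qed.

Lemma filterlim_Rmult_l_0 {F} {FF : Filter F} (c : R) (f : R -> R) :
  filterlim f F (locally 0) -> filterlim (fun t => c * f t) F (locally 0).
Proof. apply filterlim_Rmult_0_r with c, filterlim_const. Qed.

Lemma filterlim_Rplus {F} {FF : Filter F} (f g : R -> R) l1 l2 :
  filterlim f F (locally l1) -> filterlim g F (locally l2) ->
  filterlim (fun t => f t + g t) F (locally (l1 + l2)).
Proof.
  intros Hf Hg. apply (filterlim_comp_2 f g Rplus Hf Hg).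
  exact (filterlim_plus (K:=R_AbsRing) (V:=R_NormedModule) l1 l2).
Qed.

Lemma filterlim_sum_f_R0_0 {F} {FF : Filter F} (f : nat -> R -> R) n :
  (forall k, (k <= n)%nat -> filterlim (f k) F (locally 0)) ->
  filterlim (fun t => sum_f_R0 (fun k => f k t) n) F (locally 0).
Proof.
  induction n as [|n IH]; intros H; simpl; [apply H; lia|].
  rewrite <- (Rplus_0_r 0).
  apply filterlim_Rplus; [apply IH; intros; apply H; lia|apply H; lia].
Qed.

Lemma continuous_at_right (f : R -> R) t : continuous f t -> filterlim f (at_right t) (locally (f t)).
Proof. intros H. eapply filterlim_filter_le_1; [apply filter_le_within|exact H]. Qed.

Lemma continuous_at_left (f : R -> R) t : continuous f t -> filterlim f (at_left t) (locally (f t)).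
Proof. intros H. eapply filterlim_filter_le_1; [apply filter_le_within|exact H]. Qed.

Lemma at_right_0_lt c : 0 < c -> at_right 0 (fun s => 0 < s < c).
Proof.
  intros Hc. exists (mkposreal c Hc). intros s Hs Hs0. apply (proj1 (ball_R _ _ _)) in Hs; simpl in Hs.
  rewrite Rminus_0_r, Rabs_pos_eq in Hs; lra.
Qed.

Lemma at_left_1_gt c : 0 < c -> at_left 1 (fun s => 1 - c < s < 1).
Proof.
  intros Hc. exists (mkposreal c Hc). intros s Hs Hs1. apply (proj1 (ball_R _ _ _)) in Hs; simpl in Hs.
  rewrite Rabs_left in Hs; lra.
Qed.

Lemma at_right_0_at_left_1 (P : R -> Prop) : at_right 0 P -> at_left 1 (fun s => P (1 - s)).
Proof.
  intros [e He]. exists e. intros s Hs Hs1. apply He; [|lra].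
  apply (proj1 (ball_R _ _ _)) in Hs; apply (proj2 (ball_R _ _ _)).
  replace (1 - s - 0) with (- (s - 1)) by ring. now rewrite Rabs_Ropp.
Qed.

Lemma Rpower_gt_0 x p : 0 < Rpower x p.
Proof. apply exp_pos. Qed.

Lemma Rpower_1_l p : Rpower 1 p = 1.
Proof. unfold Rpower. rewrite ln_1, Rmult_0_r. apply exp_0. Qed.

Lemma Rle_Rpower_l_nonpos x y p : 0 < x <= y -> p <= 0 -> Rpower y p <= Rpower x p.
Proof.
  intros Hxy Hp. unfold Rpower.
  assert (ln x <= ln y) by (apply ln_le; lra).
  destruct (Rle_lt_or_eq_dec (p * ln y) (p * ln x)) as [Hlt|Heq]; [nra| |].
  - left; apply exp_increasing, Hlt.
  - rewrite Heq; lra.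
Qed.

Lemma filterlim_Rpower_at_right_0 p : 0 < p ->
  filterlim (fun t => Rpower t p) (at_right 0) (locally 0).
Proof.
  intros Hp. apply filterlim_locally. intros eps.
  exists (mkposreal _ (Rpower_gt_0 eps (/ p))). intros t Ht Ht0.
  apply (proj1 (ball_R _ _ _)) in Ht; apply (proj2 (ball_R _ _ _)); simpl in *.
  rewrite Rminus_0_r, Rabs_pos_eq in Ht by lra.
  rewrite Rminus_0_r, Rabs_pos_eq by (left; apply Rpower_gt_0).
  replace (pos eps) with (Rpower (Rpower eps (/ p)) p).
  - apply Rlt_Rpower_l; lra.
  - rewrite Rpower_mult, Rinv_l by lra. apply Rpower_1, cond_pos.
Qed.

Lemma filterlim_Rpower_1m_at_left_1 p : 0 < p ->
  filterlim (fun t => Rpower (1 - t) p) (at_left 1) (locally 0).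
Proof.
  intros Hp P HP. apply (at_right_0_at_left_1 (fun s => P (Rpower s p))).
  exact (filterlim_Rpower_at_right_0 p Hp P HP).
Qed.

Lemma is_derive_Rpower t p : 0 < t -> is_derive (fun s => Rpower s p) t (p * Rpower t (p - 1)).
Proof. intros Ht. apply is_derive_Reals, derivable_pt_lim_power, Ht. Qed.

Lemma is_derive_Rpower_1m t p : t < 1 ->
  is_derive (fun s => Rpower (1 - s) p) t (- (p * Rpower (1 - t) (p - 1))).
Proof.
  intros Ht.
  replace (- (p * Rpower (1 - t) (p - 1))) with (scal (-1) (p * Rpower (1 - t) (p - 1)))
    by (unfold scal; simpl; unfold mult; simpl; ring).
  apply (is_derive_comp (fun s => Rpower s p) (fun s => 1 - s)).
  - apply is_derive_Rpower; lra.
  - auto_derive; [easy|ring].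
Qed.

Lemma continuous_Rpower t p : 0 < t -> continuous (fun s => Rpower s p) t.
Proof. intros Ht. eapply continuous_of_is_derive, is_derive_Rpower, Ht. Qed.

Lemma continuous_Rpower_1m t p : t < 1 -> continuous (fun s => Rpower (1 - s) p) t.
Proof. intros Ht. eapply continuous_of_is_derive, is_derive_Rpower_1m, Ht. Qed.

Lemma between_01 u v t : 0 < u < 1 -> 0 < v < 1 -> Rmin u v <= t <= Rmax u v -> 0 < t < 1.
Proof.
  intros Hu Hv Ht. split.
  - apply Rlt_le_trans with (Rmin u v); [apply Rmin_glb_lt|]; lra.
  - apply Rle_lt_trans with (Rmax u v); [|apply Rmax_lub_lt]; lra.
Qed.

Lemma filter_prod_01 : filter_prod (at_right 0) (at_left 1)
  (fun ab => 0 < fst ab < 1 /\ 0 < snd ab < 1).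
Proof.
  exists (fun a => 0 < a < 1) (fun b => 1 - 1 < b < 1).
  - apply at_right_0_lt; lra.
  - apply at_left_1_gt; lra.
  - intros a b Ha Hb; simpl; lra.
Qed.

Lemma ex_RInt_01 (f : R -> R) u v : (forall t, 0 < t < 1 -> continuous f t) ->
  0 < u < 1 -> 0 < v < 1 -> ex_RInt f u v.
Proof. intros Hf Hu Hv. apply (ex_RInt_continuous f). intros t Ht. apply Hf, (between_01 u v); auto. Qed.

Lemma is_RInt_gen_01_ext (f g : R -> R) l : (forall t, 0 < t < 1 -> f t = g t) ->
  is_RInt_gen f (at_right 0) (at_left 1) l -> is_RInt_gen g (at_right 0) (at_left 1) l.
Proof.
  intros E. apply is_RInt_gen_ext. eapply filter_imp; [|exact filter_prod_01].
  intros [u v] [Hu Hv] t Ht; simpl in *. apply E, (between_01 u v); auto; lra.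
Qed.

Lemma is_RInt_gen_01_unique (f : R -> R) l1 l2 : is_RInt_gen f (at_right 0) (at_left 1) l1 ->
  is_RInt_gen f (at_right 0) (at_left 1) l2 -> l1 = l2.
Proof.
  intros H1 H2.
  apply (is_RInt_gen_unique (V:=R_CompleteNormedModule) (Fa:=at_right 0) (Fb:=at_left 1)) in H1, H2.
  congruence.
Qed.

Lemma is_RInt_gen_01_derive (F f : R -> R) l0 l1 :
  (forall t, 0 < t < 1 -> is_derive F t (f t)) -> (forall t, 0 < t < 1 -> continuous f t) ->
  filterlim F (at_right 0) (locally l0) -> filterlim F (at_left 1) (locally l1) ->
  is_RInt_gen f (at_right 0) (at_left 1) (l1 - l0).
Proof.
  intros HF Hf H0 H1.
  assert (EF : forall t, 0 < t < 1 -> Derive F t = f t) by (intros; apply is_derive_unique, HF; auto).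
  apply (is_RInt_gen_01_ext (Derive F)); [exact EF|].
  apply is_RInt_gen_Derive; auto; eapply filter_imp; try exact filter_prod_01;
    intros [u v] [Hu Hv] t Ht; simpl in *; pose proof (between_01 u v t Hu Hv Ht) as Ht01.
  - exists (f t). apply HF, Ht01.
  - apply (continuous_ext_loc _ f); [|apply Hf, Ht01].
    assert (Hr : 0 < Rmin t (1 - t)) by (apply Rmin_glb_lt; lra).
    exists (mkposreal _ Hr). intros s Hs. apply (proj1 (ball_R _ _ _)), Rabs_lt_between in Hs; simpl in Hs.
    pose proof (Rmin_l t (1 - t)); pose proof (Rmin_r t (1 - t)).
    symmetry; apply EF; lra.
Qed.

Lemma is_RInt_gen_01_ge_0 (g : R -> R) l : is_RInt_gen g (at_right 0) (at_left 1) l ->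
  (forall t, 0 < t < 1 -> 0 <= g t) -> 0 <= l.
Proof.
  intros Hl Hg.
  assert (Rabs l <= l); [|pose proof (Rabs_pos l); lra].
  assert (Hhalf : filter_prod (at_right 0) (at_left 1) (fun ab => 0 < fst ab < 1/2 /\ 1/2 < snd ab < 1)).
  { exists (fun a => 0 < a < 1/2) (fun b => 1 - 1/2 < b < 1);
      [apply at_right_0_lt; lra|apply at_left_1_gt; lra|intros; simpl; lra]. }
  apply (RInt_gen_norm (V:=R_CompleteNormedModule) (Fa:=at_right 0) (Fb:=at_left 1) g g l l); auto;
    eapply filter_imp; try exact Hhalf; intros [u v] [Hu Hv]; simpl in *; [lra|].
  intros t Ht. change (Rabs (g t) <= g t). rewrite Rabs_pos_eq; [lra|apply Hg; lra].
Qed.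

Lemma RInt_le_is_RInt_gen_01 (g : R -> R) l u v :
  is_RInt_gen g (at_right 0) (at_left 1) l ->
  (forall t, 0 < t < 1 -> continuous g t) -> (forall t, 0 < t < 1 -> 0 <= g t) ->
  0 < u <= v -> v < 1 -> RInt g u v <= l.
Proof.
  intros Hl Hc Hg Hu Hv.
  assert (PF : ProperFilter' (filter_prod (at_right 0) (at_left 1))).
  { apply Proper_StrongProper, filter_prod_proper;
      try apply at_right_proper_filter; apply at_left_proper_filter. }
  apply (closed_filterlim_loc (fun ab => RInt g (fst ab) (snd ab)) (fun y => RInt g u v <= y) l).
  - intros P HP. specialize (Hl P HP). unfold filtermapi in Hl.
    unfold filtermap. generalize (filter_and _ _ Hl filter_prod_01). apply filter_imp.
    intros [a b] [[y [Hy Py]] [Ha Hb]]; simpl in *.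
    rewrite (is_RInt_unique g a b y Hy). exact Py.
  - exists (fun a => 0 < a < u) (fun b => 1 - (1 - v) < b < 1);
      [apply at_right_0_lt; lra|apply at_left_1_gt; lra|].
    intros a b Ha Hb; simpl.
    assert (Ex : forall p q, 0 < p < 1 -> 0 < q < 1 -> ex_RInt g p q) by (intros; apply ex_RInt_01; auto).
    assert (Pos : forall p q, 0 < p <= q -> q < 1 -> 0 <= RInt g p q).
    { intros p q Hp Hq. apply RInt_ge_0; [lra|apply Ex; lra|]. intros t Ht; apply Hg; lra. }
    rewrite <- (RInt_Chasles g a u b), <- (RInt_Chasles g u v b) by (apply Ex; lra).
    pose proof (Pos a u ltac:(lra) ltac:(lra)); pose proof (Pos v b ltac:(lra) ltac:(lra)).
    unfold plus; simpl; lra.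
  - apply closed_ge.
Qed.

Lemma is_RInt_gen_01_scal (f : R -> R) c l : is_RInt_gen f (at_right 0) (at_left 1) l ->
  is_RInt_gen (fun t => c * f t) (at_right 0) (at_left 1) (c * l).
Proof. exact (is_RInt_gen_scal f c l). Qed.

Lemma is_RInt_gen_01_lin (f g : R -> R) a b lf lg :
  is_RInt_gen f (at_right 0) (at_left 1) lf -> is_RInt_gen g (at_right 0) (at_left 1) lg ->
  is_RInt_gen (fun t => a * f t + b * g t) (at_right 0) (at_left 1) (a * lf + b * lg).
Proof.
  intros Hf Hg.
  exact (is_RInt_gen_plus _ _ _ _ (is_RInt_gen_01_scal f a lf Hf) (is_RInt_gen_01_scal g b lg Hg)).
Qed.

Lemma ex_RInt_gen_01_of_tails (f phi psi : R -> R) :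
  (forall u v, 0 < u < 1 -> 0 < v < 1 -> ex_RInt f u v) ->
  filterlim phi (at_right 0) (locally 0) -> filterlim psi (at_left 1) (locally 0) ->
  (forall a a', 0 < a <= 1/2 -> 0 < a' <= 1/2 -> Rabs (RInt f a a') <= phi a + phi a') ->
  (forall b b', 1/2 <= b < 1 -> 1/2 <= b' < 1 -> Rabs (RInt f b b') <= psi b + psi b') ->
  ex_RInt_gen f (at_right 0) (at_left 1).
Proof.
  intros Ef Hphi Hpsi HL HR.
  assert (PF : ProperFilter (filter_prod (at_right 0) (at_left 1))).
  { apply filter_prod_proper; try apply at_right_proper_filter; apply at_left_proper_filter. }
  set (If := fun ab : R * R => RInt f (fst ab) (snd ab)).
  destruct (proj1 (filterlim_locally_cauchy (U:=R_CompleteSpace)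
              (F:=filter_prod (at_right 0) (at_left 1)) If)) as [l Hl].
  - intros eps. pose proof (cond_pos eps) as Heps.
    assert (Hphi' := proj1 (filterlim_locally phi 0) Hphi (mkposreal (eps / 4) ltac:(lra))).
    assert (Hpsi' := proj1 (filterlim_locally psi 0) Hpsi (mkposreal (eps / 4) ltac:(lra))).
    exists (fun ab => (0 < fst ab < 1/2 /\ Rabs (phi (fst ab) - 0) < eps / 4)
              /\ (1/2 < snd ab < 1 /\ Rabs (psi (snd ab) - 0) < eps / 4)).
    split.
    + exists (fun a => 0 < a < 1/2 /\ Rabs (phi a - 0) < eps / 4)
             (fun b => 1/2 < b < 1 /\ Rabs (psi b - 0) < eps / 4).
      * apply filter_and; [apply at_right_0_lt; lra|exact Hphi'].
      * apply filter_and; [|exact Hpsi'].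
        eapply filter_imp; [|apply (at_left_1_gt (1/2)); lra]. intros b Hb; lra.
      * intros; simpl; tauto.
    + intros [a b] [a' b'] [[Ha Hpa] [Hb Hpb]] [[Ha' Hpa'] [Hb' Hpb']]; simpl in *.
      rewrite Rminus_0_r in Hpa, Hpa', Hpb, Hpb'.
      apply (proj2 (ball_R _ _ _)); unfold If; simpl.
      assert (C1 : RInt f a' a + RInt f a b' = RInt f a' b') by (apply (RInt_Chasles f); apply Ef; lra).
      assert (C2 : RInt f a b + RInt f b b' = RInt f a b') by (apply (RInt_Chasles f); apply Ef; lra).
      replace (RInt f a' b' - RInt f a b) with (RInt f a' a + RInt f b b') by lra.
      pose proof (HL a' a ltac:(lra) ltac:(lra)); pose proof (HR b b' ltac:(lra) ltac:(lra)).
      pose proof (Rabs_triang (RInt f a' a) (RInt f b b')).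
      pose proof (Rle_abs (phi a)); pose proof (Rle_abs (phi a'));
      pose proof (Rle_abs (psi b)); pose proof (Rle_abs (psi b')). lra.
  - exists l. apply (filterlimi_lim_ext_loc If); [|exact Hl].
    eapply filter_imp; [|exact filter_prod_01]. intros [u v] [Hu Hv]; simpl in *.
    exact (RInt_correct f u v (Ef u v Hu Hv)).
Qed.

Definition weighted (al be : R) (G : R -> R) (t : R) : R :=
  Rpower t al * Rpower (1 - t) be * G t.

Lemma continuous_weighted al be G t : 0 < t < 1 -> continuous G t -> continuous (weighted al be G) t.
Proof.
  intros Ht HG. unfold weighted.
  apply continuous_Rmult; [apply continuous_Rmult|exact HG].
  - apply continuous_Rpower; lra.
  - apply continuous_Rpower_1m; lra.
Qed.

Lemma RInt_Rpower g u v : 0 < u <= v -> g + 1 <> 0 ->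
  RInt (fun t => Rpower t g) u v = (Rpower v (g + 1) - Rpower u (g + 1)) / (g + 1).
Proof.
  intros Huv Hg. apply is_RInt_unique.
  replace ((Rpower v (g + 1) - Rpower u (g + 1)) / (g + 1))
    with (/ (g + 1) * Rpower v (g + 1) - / (g + 1) * Rpower u (g + 1)) by (field; exact Hg).
  apply (is_RInt_derive (fun t => / (g + 1) * Rpower t (g + 1)));
    intros t Ht; rewrite Rmin_left, Rmax_right in Ht by lra.
  - replace (Rpower t g) with (/ (g + 1) * ((g + 1) * Rpower t (g + 1 - 1)))
      by (replace (g + 1 - 1) with g by ring; field; exact Hg).
    apply (is_derive_scal (fun t => Rpower t (g + 1))), is_derive_Rpower; lra.
  - apply continuous_Rpower; lra.
Qed.

Lemma abs_RInt_le_Rpower (f : R -> R) g M c :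
  -1 < g -> (forall t, 0 < t <= c -> continuous f t) ->
  (forall t, 0 < t <= c -> Rabs (f t) <= M * Rpower t g) ->
  forall a a', 0 < a <= c -> 0 < a' <= c ->
  Rabs (RInt f a a') <= M / (g + 1) * Rpower a (g + 1) + M / (g + 1) * Rpower a' (g + 1).
Proof.
  intros Hg Hc Hb a a' Ha Ha'.
  assert (HM : 0 <= M / (g + 1)).
  { apply Rdiv_le_0_compat; [|lra].
    pose proof (Hb a Ha); pose proof (Rpower_gt_0 a g); pose proof (Rabs_pos (f a)); nra. }
  assert (key : forall u v, 0 < u <= v -> v <= c ->
            Rabs (RInt f u v) <= M / (g + 1) * Rpower u (g + 1) + M / (g + 1) * Rpower v (g + 1)).
  { intros u v Huv Hv.
    assert (Ef : ex_RInt f u v).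
    { apply (ex_RInt_continuous f). intros t; rewrite Rmin_left, Rmax_right by lra.
      intros; apply Hc; lra. }
    assert (Eg : ex_RInt (fun t => M * Rpower t g) u v).
    { apply (ex_RInt_continuous (fun t => M * Rpower t g)). intros t; rewrite Rmin_left, Rmax_right by lra.
      intros; apply continuous_Rmult; [apply continuous_Rconst|apply continuous_Rpower; lra]. }
    eapply Rle_trans; [apply abs_RInt_le; [lra|exact Ef]|].
    eapply Rle_trans.
    { apply (RInt_le _ (fun t => M * Rpower t g)); [lra| |exact Eg|intros; apply Hb; lra].
      apply (ex_RInt_continuous (fun t => Rabs (f t))). intros t; rewrite Rmin_left, Rmax_right by lra.
      intros; apply (continuous_comp f Rabs), continuous_Rabs; apply Hc; lra. }
    replace (RInt (fun t => M * Rpower t g) u v) with (M * RInt (fun t => Rpower t g) u v).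
    2:{ symmetry. apply (RInt_scal (fun t => Rpower t g) u v M).
        apply (ex_RInt_continuous (fun t => Rpower t g)). intros t; rewrite Rmin_left, Rmax_right by lra.
        intros; apply continuous_Rpower; lra. }
    rewrite RInt_Rpower by lra.
    pose proof (Rpower_gt_0 u (g + 1)). unfold Rdiv in *. nra. }
  destruct (Rle_dec a a') as [Hle|Hlt]; [apply key; lra|].
  rewrite <- opp_RInt_swap.
  - change (Rabs (- RInt f a' a) <= M / (g + 1) * Rpower a (g + 1) + M / (g + 1) * Rpower a' (g + 1)).
    rewrite Rabs_Ropp, Rplus_comm. apply key; lra.
  - apply (ex_RInt_continuous f). intros t; rewrite Rmin_left, Rmax_right by lra. intros; apply Hc; lra.
Qed.

Lemma Rpower_1m_le_max be t : 0 < t <= 1/2 -> Rpower (1 - t) be <= Rmax 1 (Rpower (1/2) be).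
Proof.
  intros Ht. destruct (Rle_dec 0 be) as [Hbe|Hbe].
  - eapply Rle_trans; [apply (Rle_Rpower_l (1 - t) 1 be); lra|]. rewrite Rpower_1_l. apply Rmax_l.
  - eapply Rle_trans; [apply (Rle_Rpower_l_nonpos (1/2) (1 - t) be); lra|]. apply Rmax_r.
Qed.

Lemma abs_RInt_weighted_le al be K G :
  -1 < al -> (forall t, 0 < t < 1 -> continuous G t) -> (forall t, 0 < t < 1 -> Rabs (G t) <= K) ->
  forall a a', 0 < a <= 1/2 -> 0 < a' <= 1/2 ->
  Rabs (RInt (weighted al be G) a a')
    <= K * Rmax 1 (Rpower (1/2) be) / (al + 1) * Rpower a (al + 1)
       + K * Rmax 1 (Rpower (1/2) be) / (al + 1) * Rpower a' (al + 1).
Proof.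
  intros Hal Hc HK. apply abs_RInt_le_Rpower; [exact Hal| |].
  - intros t Ht. apply continuous_weighted, Hc; lra.
  - intros t Ht. unfold weighted.
    rewrite !Rabs_mult, (Rabs_pos_eq (Rpower t al)), (Rabs_pos_eq (Rpower (1 - t) be))
      by (left; apply Rpower_gt_0).
    pose proof (Rpower_1m_le_max be t Ht); pose proof (HK t ltac:(lra)).
    pose proof (Rpower_gt_0 t al); pose proof (Rpower_gt_0 (1 - t) be); pose proof (Rabs_pos (G t)).
    replace (K * Rmax 1 (Rpower (1/2) be) * Rpower t al)
      with (Rpower t al * (Rmax 1 (Rpower (1/2) be) * K)) by ring.
    rewrite Rmult_assoc. apply Rmult_le_compat_l; [lra|]. apply Rmult_le_compat; lra.
Qed.

Lemma continuous_comp_1m (G : R -> R) t : continuous G (1 - t) -> continuous (fun s => G (1 - s)) t.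
Proof.
  intros HG. apply (continuous_comp (fun s => 1 - s) G); [|exact HG].
  apply (continuous_of_is_derive _ t (-1)). auto_derive; [easy|ring].
Qed.

Lemma RInt_weighted_reflect al be G u v : (forall t, 0 < t < 1 -> continuous G t) ->
  0 < u < 1 -> 0 < v < 1 ->
  RInt (weighted al be G) u v = - RInt (weighted be al (fun s => G (1 - s))) (1 - u) (1 - v).
Proof.
  intros Hc Hu Hv.
  assert (Hc' : forall t, 0 < t < 1 -> continuous (fun s => G (1 - s)) t)
    by (intros; apply continuous_comp_1m, Hc; lra).
  assert (E := RInt_comp_lin (weighted al be G) (-1) 1 (1 - u) (1 - v)).
  replace (-1 * (1 - u) + 1) with u in E by ring. replace (-1 * (1 - v) + 1) with v in E by ring.
  rewrite <- E by (apply ex_RInt_01; auto; intros; apply continuous_weighted; auto).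
  rewrite <- (RInt_opp (V:=R_CompleteNormedModule))
    by (apply ex_RInt_01; try lra; intros; apply continuous_weighted; auto).
  apply RInt_ext. intros t _.
  unfold weighted, scal, opp; simpl; unfold mult; simpl.
  replace (1 - (-1 * t + 1)) with t by ring. replace (-1 * t + 1) with (1 - t) by ring. ring.
Qed.

Lemma ex_RInt_gen_weighted al be K G :
  -1 < al -> -1 < be -> (forall t, 0 < t < 1 -> continuous G t) ->
  (forall t, 0 < t < 1 -> Rabs (G t) <= K) ->
  ex_RInt_gen (weighted al be G) (at_right 0) (at_left 1).
Proof.
  intros Hal Hbe Hc HK.
  assert (Hc' : forall t, 0 < t < 1 -> continuous (fun s => G (1 - s)) t)
    by (intros; apply continuous_comp_1m, Hc; lra).
  assert (HK' : forall t, 0 < t < 1 -> Rabs (G (1 - t)) <= K) by (intros; apply HK; lra).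
  assert (Ex : forall u v, 0 < u < 1 -> 0 < v < 1 -> ex_RInt (weighted al be G) u v)
    by (intros; apply ex_RInt_01; auto; intros; apply continuous_weighted; auto).
  apply (ex_RInt_gen_01_of_tails _
           (fun a => K * Rmax 1 (Rpower (1/2) be) / (al + 1) * Rpower a (al + 1))
           (fun b => K * Rmax 1 (Rpower (1/2) al) / (be + 1) * Rpower (1 - b) (be + 1)));
    [exact Ex| | | |].
  - apply filterlim_Rmult_l_0, filterlim_Rpower_at_right_0; lra.
  - apply filterlim_Rmult_l_0, filterlim_Rpower_1m_at_left_1; lra.
  - intros a a' Ha Ha'. apply abs_RInt_weighted_le; auto.
  - intros b b' Hb Hb'. rewrite RInt_weighted_reflect, Rabs_Ropp by (auto; lra).
    apply abs_RInt_weighted_le; auto; lra.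
Qed.

(* Binomial coefficients by Pascal's rule; unlike [Binomial.C] they vanish above the diagonal. *)
Fixpoint pascal (j i : nat) : R :=
  match j, i with
  | O, O => 1
  | O, S _ => 0
  | S _, O => 1
  | S j', S i' => pascal j' i' + pascal j' (S i')
  end.

Lemma pascal_0_r j : pascal j 0 = 1.
Proof. destruct j; reflexivity. Qed.

Lemma pascal_gt j i : (j < i)%nat -> pascal j i = 0.
Proof.
  revert i; induction j as [|j IH]; intros i Hi; destruct i; try lia; simpl; [easy|].
  rewrite !IH by lia. ring.
Qed.

Lemma pascal_C j i : (i <= j)%nat -> pascal j i = Binomial.C j i.
Proof.
  assert (C_0 : forall n, Binomial.C n 0 = 1).
  { intros n. unfold Binomial.C. rewrite Nat.sub_0_r. simpl. field. apply INR_fact_neq_0. }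
  assert (C_diag : forall n, Binomial.C n n = 1).
  { intros n. unfold Binomial.C. rewrite Nat.sub_diag. simpl. field. apply INR_fact_neq_0. }
  revert i; induction j as [|j IH]; intros i Hi.
  - destruct i; [|lia]. now rewrite C_0.
  - destruct i; [now rewrite pascal_0_r, C_0|]. simpl.
    destruct (Nat.eq_dec i j) as [->|Hij].
    + rewrite (pascal_gt j (S j)), IH, !C_diag by lia. ring.
    + rewrite !IH by lia. apply Binomial.pascal. lia.
Qed.

Lemma pascal_fact j i : (i <= j)%nat ->
  pascal j i * INR (Factorial.fact i) * INR (Factorial.fact (j - i)) = INR (Factorial.fact j).
Proof.
  intros Hij. rewrite pascal_C by exact Hij. unfold Binomial.C.
  field. split; apply INR_fact_neq_0.
Qed.

Lemma sum_pascal_step (x y : nat -> R) j :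
  sum_f_R0 (fun i => pascal j i * (x (S i) * y (j - i)%nat + x i * y (S (j - i)))) j
  = sum_f_R0 (fun i => pascal (S j) i * x i * y (S j - i)%nat) (S j).
Proof.
  rewrite (decomp_sum _ (S j)) by lia. simpl pred. simpl (pascal (S j) 0).
  transitivity (sum_f_R0 (fun i => pascal j i * x (S i) * y (j - i)%nat) j
                + sum_f_R0 (fun i => pascal j i * x i * y (S (j - i))) j).
  { rewrite <- sum_plus. apply sum_eq. intros; ring. }
  assert (E : sum_f_R0 (fun i => pascal j i * x i * y (S (j - i))) j
              = x O * y (S j) + sum_f_R0 (fun i => pascal j (S i) * x (S i) * y (j - i)%nat) j).
  { pose proof (tech5 (fun i => pascal j i * x i * y (S (j - i))) j) as T; cbv beta in T.
    rewrite (pascal_gt j (S j)), !Rmult_0_l, Rplus_0_r in T by lia.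
    rewrite <- T, decomp_sum by lia. simpl pred. rewrite pascal_0_r, Nat.sub_0_r.
    f_equal; [ring|]. apply sum_eq. intros i Hi.
    destruct (Nat.eq_dec i j) as [->|Hij]; [rewrite pascal_gt by lia; ring|].
    now replace (S (j - S i)) with (j - i)%nat by lia. }
  rewrite E, Nat.sub_0_r.
  replace (sum_f_R0 (fun i => pascal (S j) (S i) * x (S i) * y (S j - S i)%nat) j)
    with (sum_f_R0 (fun i => pascal j i * x (S i) * y (j - i)%nat) j
          + sum_f_R0 (fun i => pascal j (S i) * x (S i) * y (j - i)%nat) j).
  2:{ rewrite <- sum_plus. apply sum_eq. intros i Hi. simpl (S j - S i)%nat. simpl (pascal (S j) (S i)). ring. }
  ring.
Qed.

Definition leibniz_sum (u v : nat -> R -> R) (j : nat) (t : R) : R :=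
  sum_f_R0 (fun i => pascal j i * u i t * v (j - i)%nat t) j.

Lemma is_derive_leibniz_sum (u v : nat -> R -> R) t :
  (forall i, is_derive (u i) t (u (S i) t)) -> (forall k, is_derive (v k) t (v (S k) t)) ->
  forall j, is_derive (leibniz_sum u v j) t (leibniz_sum u v (S j) t).
Proof.
  intros Hu Hv j. unfold leibniz_sum. rewrite <- (sum_pascal_step (fun i => u i t) (fun k => v k t)).
  apply (is_derive_sum_f_R0 (fun i s => pascal j i * u i s * v (j - i)%nat s)). intros i Hi.
  replace (pascal j i * (u (S i) t * v (j - i)%nat t + u i t * v (S (j - i)) t))
    with (pascal j i * u (S i) t * v (j - i)%nat t + pascal j i * u i t * v (S (j - i)) t) by ring.
  apply (is_derive_Rmult (fun s => pascal j i * u i s) (v (j - i)%nat)); [|apply Hv].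
  apply is_derive_scal, Hu.
Qed.

Fixpoint falling (r : R) (k : nat) : R :=
  match k with O => 1 | S k' => falling r k' * (r - INR k') end.

Lemma falling_fact r k : falling r k = INR (Factorial.fact k) * gbinom r k.
Proof.
  induction k as [|k IH]; cbn [falling gbinom]; [simpl; ring|].
  rewrite IH, fact_simpl, mult_INR. field. apply not_0_INR. lia.
Qed.

Definition Dn_Rpower (al : R) (k : nat) (t : R) : R := falling al k * Rpower t (al - INR k).

Definition Dn_Rpower_1m (be : R) (k : nat) (t : R) : R :=
  (-1) ^ k * falling be k * Rpower (1 - t) (be - INR k).

Definition Dn_weight (al be : R) : nat -> R -> R := leibniz_sum (Dn_Rpower_1m be) (Dn_Rpower al).

Lemma is_derive_Dn_Rpower al k t : 0 < t -> is_derive (Dn_Rpower al k) t (Dn_Rpower al (S k) t).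
Proof.
  intros Ht. unfold Dn_Rpower. simpl falling. rewrite S_INR.
  replace (al - (INR k + 1)) with (al - INR k - 1) by ring.
  replace (falling al k * (al - INR k) * Rpower t (al - INR k - 1))
    with (falling al k * ((al - INR k) * Rpower t (al - INR k - 1))) by ring.
  apply is_derive_scal, is_derive_Rpower, Ht.
Qed.

Lemma is_derive_Dn_Rpower_1m be k t : t < 1 ->
  is_derive (Dn_Rpower_1m be k) t (Dn_Rpower_1m be (S k) t).
Proof.
  intros Ht. unfold Dn_Rpower_1m. simpl falling. rewrite S_INR.
  replace (be - (INR k + 1)) with (be - INR k - 1) by ring.
  replace ((-1) ^ S k * (falling be k * (be - INR k)) * Rpower (1 - t) (be - INR k - 1))
    with ((-1) ^ k * falling be k * (- ((be - INR k) * Rpower (1 - t) (be - INR k - 1))))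
    by (simpl pow; ring).
  apply is_derive_scal, is_derive_Rpower_1m, Ht.
Qed.

Lemma is_derive_Dn_weight al be j t : 0 < t < 1 ->
  is_derive (Dn_weight al be j) t (Dn_weight al be (S j) t).
Proof.
  intros Ht. apply is_derive_leibniz_sum; intros.
  - apply is_derive_Dn_Rpower_1m; lra.
  - apply is_derive_Dn_Rpower; lra.
Qed.

Lemma Dn_weight_0 al be t : Dn_weight al be 0 t = Rpower t al * Rpower (1 - t) be.
Proof. unfold Dn_weight, leibniz_sum, Dn_Rpower, Dn_Rpower_1m. simpl. rewrite !Rminus_0_r. ring. Qed.

Lemma Dn_weight_rodrigues n mu kappa t : 0 < t < 1 ->
  Dn_weight (INR n + kappa) (INR n + mu) n t
  = (-1) ^ n * INR (Factorial.fact n) * jac_weight mu kappa t * jacobiP n mu kappa t.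
Proof.
  intros Ht. unfold Dn_weight, leibniz_sum, jacobiP, jac_weight.
  rewrite scal_sum. apply sum_eq. intros i Hi.
  unfold Dn_Rpower, Dn_Rpower_1m. rewrite !falling_fact.
  replace (INR n + mu - INR i) with (mu + INR (n - i)) by (rewrite minus_INR by lia; ring).
  replace (INR n + kappa - INR (n - i)) with (kappa + INR i) by (rewrite minus_INR by lia; ring).
  rewrite !Rpower_plus, !Rpower_pow by lra.
  assert (E1 : (1 - t) ^ (n - i) = (-1) ^ (n - i) * (t - 1) ^ (n - i))
    by (rewrite <- Rpow_mult_distr; f_equal; ring).
  assert (E2 : (-1) ^ n = (-1) ^ i * (-1) ^ (n - i)) by (rewrite <- pow_add; f_equal; lia).
  rewrite E1, E2, <- (pascal_fact n i Hi). ring.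
Qed.

Lemma continuous_Dn_weight al be j t : 0 < t < 1 -> continuous (Dn_weight al be j) t.
Proof. intros Ht. eapply continuous_of_is_derive, is_derive_Dn_weight, Ht. Qed.

Lemma Dn_weight_at_right_0 al be j : INR j < al ->
  filterlim (Dn_weight al be j) (at_right 0) (locally 0).
Proof.
  intros Hj. apply (filterlim_sum_f_R0_0 (fun i t => pascal j i * Dn_Rpower_1m be i t * Dn_Rpower al (j - i) t)).
  intros i Hi. apply filterlim_Rmult_0_r with (pascal j i * Dn_Rpower_1m be i 0).
  - apply (continuous_at_right (fun t => pascal j i * Dn_Rpower_1m be i t)).
    apply continuous_Rmult; [apply continuous_Rconst|].
    eapply continuous_of_is_derive, is_derive_Dn_Rpower_1m; lra.
  - apply filterlim_Rmult_l_0, filterlim_Rpower_at_right_0.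
    assert (INR (j - i) <= INR j) by (apply le_INR; lia). lra.
Qed.

Lemma Dn_weight_at_left_1 al be j : INR j < be ->
  filterlim (Dn_weight al be j) (at_left 1) (locally 0).
Proof.
  intros Hj. apply (filterlim_sum_f_R0_0 (fun i t => pascal j i * Dn_Rpower_1m be i t * Dn_Rpower al (j - i) t)).
  intros i Hi. apply filterlim_Rmult_0_l with (Dn_Rpower al (j - i) 1).
  - apply filterlim_Rmult_l_0, filterlim_Rmult_l_0, filterlim_Rpower_1m_at_left_1.
    assert (INR i <= INR j) by (apply le_INR; lia). lra.
  - apply (continuous_at_left (Dn_Rpower al (j - i))).
    eapply continuous_of_is_derive, is_derive_Dn_Rpower; lra.
Qed.

Lemma sum_f_R0_telescope (a : nat -> R) m : sum_f_R0 (fun i => a i - a (S i)) m = a O - a (S m).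
Proof. induction m as [|m IH]; simpl; [|rewrite IH]; ring. Qed.

(* The primitive produced by integrating [Dn_weight al be (S m) * F 0] by parts [m + 1] times. *)
Definition ibp_primitive al be m (F : nat -> R -> R) (t : R) : R :=
  sum_f_R0 (fun i => (-1) ^ i * (Dn_weight al be (m - i) t * F i t)) m.

Lemma is_derive_ibp_primitive al be m (F : nat -> R -> R) t : 0 < t < 1 ->
  (forall i, (i <= m)%nat -> is_derive (F i) t (F (S i) t)) ->
  is_derive (ibp_primitive al be m F) t
    (Dn_weight al be (S m) t * F O t - (-1) ^ S m * (Dn_weight al be O t * F (S m) t)).
Proof.
  intros Ht HF.
  set (a := fun i => (-1) ^ i * Dn_weight al be (S m - i) t * F i t).
  replace (Dn_weight al be (S m) t * F O t - (-1) ^ S m * (Dn_weight al be O t * F (S m) t))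
    with (sum_f_R0 (fun i => a i - a (S i)) m)
    by (rewrite sum_f_R0_telescope; unfold a; rewrite Nat.sub_diag, Nat.sub_0_r; simpl pow; ring).
  apply is_derive_sum_f_R0. intros i Hi.
  replace (a i - a (S i))
    with ((-1) ^ i * (Dn_weight al be (S (m - i)) t * F i t + Dn_weight al be (m - i) t * F (S i) t))
    by (unfold a; replace (S m - i)%nat with (S (m - i)) by lia; simpl (S m - S i)%nat; simpl pow; ring).
  apply is_derive_scal, is_derive_Rmult; [apply is_derive_Dn_weight, Ht|apply HF, Hi].
Qed.

Lemma filterlim_ibp_primitive_0 al be m (F : nat -> R -> R) Fl {FFl : Filter Fl} :
  (forall k, (k <= m)%nat -> filterlim (Dn_weight al be k) Fl (locally 0)) ->
  (forall i, (i <= m)%nat -> exists c, filterlim (F i) Fl (locally c)) ->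
  filterlim (ibp_primitive al be m F) Fl (locally 0).
Proof.
  intros HD HF. apply (filterlim_sum_f_R0_0 (fun i t => (-1) ^ i * (Dn_weight al be (m - i) t * F i t))).
  intros i Hi. destruct (HF i Hi) as [c Hc].
  apply filterlim_Rmult_l_0, (filterlim_Rmult_0_l _ _ c); [apply HD; lia|exact Hc].
Qed.

Lemma is_RInt_gen_ibp_boundary al be m (F : nat -> R -> R) :
  INR m < al -> INR m < be ->
  (forall i t, (i <= m)%nat -> 0 <= t <= 1 -> is_derive (F i) t (F (S i) t)) ->
  (forall t, 0 < t < 1 -> continuous (F (S m)) t) ->
  is_RInt_gen (fun t => Dn_weight al be (S m) t * F O t - (-1) ^ S m * (Dn_weight al be O t * F (S m) t))
    (at_right 0) (at_left 1) 0.
Proof.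
  intros Hal Hbe HF HFc.
  assert (HFcont : forall i t, (i <= m)%nat -> 0 <= t <= 1 -> continuous (F i) t)
    by (intros; eapply continuous_of_is_derive, HF; eauto).
  assert (Hm : forall k, (k <= m)%nat -> INR k <= INR m) by (intros; apply le_INR; assumption).
  set (g := fun t => Dn_weight al be (S m) t * F O t - (-1) ^ S m * (Dn_weight al be O t * F (S m) t)).
  enough (E : is_RInt_gen g (at_right 0) (at_left 1) (0 - 0)) by (rewrite Rminus_0_r in E; exact E).
  apply (is_RInt_gen_01_derive (ibp_primitive al be m F)).
  - intros t Ht. apply is_derive_ibp_primitive; [exact Ht|intros; apply HF; [assumption|lra]].
  - intros t Ht. unfold g. apply continuous_Rminus.
    + apply continuous_Rmult; [apply continuous_Dn_weight, Ht|apply HFcont; lia || lra].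
    + apply (continuous_Rmult (fun _ => (-1) ^ S m) (fun t => Dn_weight al be 0 t * F (S m) t));
        [apply continuous_Rconst|apply continuous_Rmult; [apply continuous_Dn_weight|apply HFc]; exact Ht].
  - apply (filterlim_ibp_primitive_0 al be m F (at_right 0)).
    + intros k Hk. apply Dn_weight_at_right_0. specialize (Hm k Hk). lra.
    + intros i Hi. exists (F i 0). apply continuous_at_right, HFcont; lia || lra.
  - apply (filterlim_ibp_primitive_0 al be m F (at_left 1)).
    + intros k Hk. apply Dn_weight_at_left_1. specialize (Hm k Hk). lra.
    + intros i Hi. exists (F i 1). apply continuous_at_left, HFcont; lia || lra.
Qed.

Lemma is_RInt_gen_weighted_lin al be G1 G2 a1 a2 l1 l2 :
  is_RInt_gen (weighted al be G1) (at_right 0) (at_left 1) l1 ->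
  is_RInt_gen (weighted al be G2) (at_right 0) (at_left 1) l2 ->
  is_RInt_gen (weighted al be (fun t => a1 * G1 t + a2 * G2 t)) (at_right 0) (at_left 1)
    (a1 * l1 + a2 * l2).
Proof.
  intros H1 H2.
  apply (is_RInt_gen_01_ext (fun t => a1 * weighted al be G1 t + a2 * weighted al be G2 t)).
  - intros t _. unfold weighted. ring.
  - apply is_RInt_gen_01_lin; assumption.
Qed.

Lemma is_RInt_gen_weighted_le al be G1 G2 l1 l2 :
  is_RInt_gen (weighted al be G1) (at_right 0) (at_left 1) l1 ->
  is_RInt_gen (weighted al be G2) (at_right 0) (at_left 1) l2 ->
  (forall t, 0 < t < 1 -> G1 t <= G2 t) -> l1 <= l2.
Proof.
  intros H1 H2 H12.
  enough (0 <= 1 * l2 + -1 * l1) by lra.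
  apply (is_RInt_gen_01_ge_0 _ _ (is_RInt_gen_weighted_lin al be G2 G1 1 (-1) l2 l1 H2 H1)).
  intros t Ht. unfold weighted.
  pose proof (H12 t Ht); pose proof (Rpower_gt_0 t al); pose proof (Rpower_gt_0 (1 - t) be).
  assert (0 < Rpower t al * Rpower (1 - t) be) by (apply Rmult_lt_0_compat; assumption). nra.
Qed.

Lemma is_RInt_gen_Dn_weight_ibp al be n (F : nat -> R -> R) l :
  INR n < al + 1 -> INR n < be + 1 ->
  (forall i t, (i < n)%nat -> 0 <= t <= 1 -> is_derive (F i) t (F (S i) t)) ->
  (forall t, 0 < t < 1 -> continuous (F n) t) ->
  is_RInt_gen (weighted al be (F n)) (at_right 0) (at_left 1) l ->
  is_RInt_gen (fun t => Dn_weight al be n t * F O t) (at_right 0) (at_left 1) ((-1) ^ n * l).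
Proof.
  intros Hal Hbe HF HFc Hl. destruct n as [|m].
  - rewrite pow_O, Rmult_1_l. apply (is_RInt_gen_01_ext (weighted al be (F O))); [|exact Hl].
    intros t _. unfold weighted. rewrite Dn_weight_0. ring.
  - rewrite S_INR in Hal, Hbe.
    assert (Hb := is_RInt_gen_ibp_boundary al be m F ltac:(lra) ltac:(lra)
                    (fun i t Hi => HF i t ltac:(lia)) HFc).
    apply (is_RInt_gen_01_ext (fun t =>
             1 * (Dn_weight al be (S m) t * F O t - (-1) ^ S m * (Dn_weight al be O t * F (S m) t))
             + (-1) ^ S m * weighted al be (F (S m)) t)).
    + intros t _. unfold weighted. rewrite Dn_weight_0. ring.
    + replace ((-1) ^ S m * l) with (1 * 0 + (-1) ^ S m * l) by ring.
      apply is_RInt_gen_01_lin; assumption.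
Qed.

Lemma is_RInt_gen_weighted al be K G : -1 < al -> -1 < be ->
  (forall t, 0 < t < 1 -> continuous G t) -> (forall t, 0 < t < 1 -> Rabs (G t) <= K) ->
  is_RInt_gen (weighted al be G) (at_right 0) (at_left 1)
    (RInt_gen (weighted al be G) (at_right 0) (at_left 1)).
Proof.
  intros Hal Hbe Hc HK.
  apply (RInt_gen_correct (V:=R_CompleteNormedModule) (Fa:=at_right 0) (Fb:=at_left 1)).
  exact (ex_RInt_gen_weighted al be K G Hal Hbe Hc HK).
Qed.

Section BetaMoments.

Variables al be : R.
Hypotheses (Hal : -1 < al) (Hbe : -1 < be).

Let B : R := RInt_gen (weighted al be (fun _ => 1)) (at_right 0) (at_left 1).
Let B1 : R := RInt_gen (weighted al be (fun t => t)) (at_right 0) (at_left 1).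

Lemma is_RInt_gen_weighted_1 : is_RInt_gen (weighted al be (fun _ => 1)) (at_right 0) (at_left 1) B.
Proof.
  apply (is_RInt_gen_weighted al be 1); auto.
  - intros; apply continuous_Rconst.
  - intros; rewrite Rabs_R1; lra.
Qed.

Lemma is_RInt_gen_weighted_id : is_RInt_gen (weighted al be (fun t => t)) (at_right 0) (at_left 1) B1.
Proof.
  apply (is_RInt_gen_weighted al be 1); auto.
  - intros; apply continuous_Rid.
  - intros; rewrite Rabs_pos_eq; lra.
Qed.

Lemma RInt_gen_weighted_1_gt_0 : 0 < B.
Proof.
  apply Rlt_le_trans with (RInt (weighted al be (fun _ => 1)) (1/4) (3/4)).
  - apply RInt_gt_0; [lra| |].
    + intros t Ht. unfold weighted. rewrite Rmult_1_r. apply Rmult_lt_0_compat; apply Rpower_gt_0.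
    + intros t Ht. apply continuous_weighted; [lra|apply continuous_Rconst].
  - apply RInt_le_is_RInt_gen_01; [exact is_RInt_gen_weighted_1| | |lra|lra]; intros t Ht.
    + apply continuous_weighted; [lra|apply continuous_Rconst].
    + unfold weighted. rewrite Rmult_1_r. left; apply Rmult_lt_0_compat; apply Rpower_gt_0.
Qed.

(* [d/dt (t^(al+1) (1-t)^(be+1))] is the weight times [(al+1) - (al+be+2) t], and the
   primitive vanishes at both ends. *)
Lemma RInt_gen_weighted_id : B1 = B * (al + 1) / (al + be + 2).
Proof.
  set (G := fun t : R => (al + 1) * 1 + - (al + be + 2) * t).
  assert (Hprim : is_RInt_gen (weighted al be G) (at_right 0) (at_left 1) (0 - 0)).
  { apply (is_RInt_gen_01_derive (fun t => Rpower t (al + 1) * Rpower (1 - t) (be + 1))).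
    - intros t Ht.
      replace (weighted al be G t)
        with ((al + 1) * Rpower t (al + 1 - 1) * Rpower (1 - t) (be + 1)
              + Rpower t (al + 1) * - ((be + 1) * Rpower (1 - t) (be + 1 - 1))).
      + apply (is_derive_Rmult (fun s => Rpower s (al + 1)) (fun s => Rpower (1 - s) (be + 1)));
          [apply is_derive_Rpower|apply is_derive_Rpower_1m]; lra.
      + unfold weighted, G. replace (al + 1 - 1) with al by ring. replace (be + 1 - 1) with be by ring.
        rewrite !Rpower_plus, !Rpower_1 by lra. ring.
    - intros t Ht. apply continuous_weighted; [exact Ht|].
      apply continuous_Rplus; apply continuous_Rmult;
        try apply continuous_Rconst; apply continuous_Rid.
    - apply filterlim_Rmult_0_l with (Rpower (1 - 0) (be + 1)).
      + apply filterlim_Rpower_at_right_0; lra.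
      + apply (continuous_at_right (fun s => Rpower (1 - s) (be + 1))), continuous_Rpower_1m; lra.
    - apply filterlim_Rmult_0_r with (Rpower 1 (al + 1)).
      + apply (continuous_at_left (fun s => Rpower s (al + 1))), continuous_Rpower; lra.
      + apply filterlim_Rpower_1m_at_left_1; lra. }
  assert (E := is_RInt_gen_01_unique _ _ _ Hprim
                 (is_RInt_gen_weighted_lin al be _ _ (al + 1) (- (al + be + 2)) B B1
                    is_RInt_gen_weighted_1 is_RInt_gen_weighted_id)).
  field_simplify_eq; lra.
Qed.

End BetaMoments.

Lemma in_open_interval_between a b u v c : in_open_interval a b u -> in_open_interval a b v ->
  Rmin u v <= c <= Rmax u v -> in_open_interval a b c.
Proof.
  unfold in_open_interval. intros [Hau Hub] [Hav Hbv] Hc.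
  destruct a as [a| |]; destruct b as [b| |]; simpl in *; split; try tauto.
  all: try (apply Rlt_le_trans with (Rmin u v); [apply Rmin_glb_lt|]; tauto).
  all: apply Rle_lt_trans with (Rmax u v); [|apply Rmax_lub_lt]; tauto.
Qed.

Lemma between_affine t0 h s : 0 <= s <= 1 -> Rmin t0 (t0 + h) <= t0 + h * s <= Rmax t0 (t0 + h).
Proof.
  intros Hs. destruct (Rle_dec 0 h).
  - rewrite Rmin_left, Rmax_right by lra. nra.
  - rewrite Rmin_right, Rmax_left by lra. nra.
Qed.

Lemma continuous_bounded (f : R -> R) l r : l <= r -> (forall t, l <= t <= r -> continuous f t) ->
  exists K, forall t, l <= t <= r -> Rabs (f t) <= K.
Proof.
  intros Hlr Hc.
  destruct (continuity_ab_maj f l r Hlr) as [M [HM _]].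
  { intros t Ht. apply continuity_pt_filterlim, Hc, Ht. }
  destruct (continuity_ab_min f l r Hlr) as [m [Hm _]].
  { intros t Ht. apply continuity_pt_filterlim, Hc, Ht. }
  exists (Rmax (Rabs (f M)) (Rabs (f m))). intros t Ht.
  specialize (HM t Ht); specialize (Hm t Ht).
  pose proof (Rle_abs (f M)); pose proof (Rle_abs (- f m)); rewrite Rabs_Ropp in *.
  pose proof (Rmax_l (Rabs (f M)) (Rabs (f m))); pose proof (Rmax_r (Rabs (f M)) (Rabs (f m))).
  apply Rabs_le; lra.
Qed.

Lemma inf_sup_on_bounded (f : R -> R) l r K : l < r -> (forall t, l < t < r -> Rabs (f t) <= K) ->
  exists m M, inf_on f l r = Finite m /\ sup_on f l r = Finite M
              /\ forall t, l < t < r -> m <= f t <= M.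
Proof.
  intros Hlr HK. unfold inf_on, sup_on.
  set (E := fun y => exists t, l < t < r /\ y = f t).
  assert (Emid : E (f ((l + r) / 2))) by (exists ((l + r) / 2); split; [lra|reflexivity]).
  assert (EK : forall y, E y -> - K <= y <= K) by (intros y [t [Ht ->]]; apply Rabs_le_between, HK, Ht).
  destruct (Glb_Rbar_correct E) as [Hlb Hglb]; destruct (Lub_Rbar_correct E) as [Hub Hlub].
  assert (G1 : Rbar_le (Finite (- K)) (Glb_Rbar E)) by (apply Hglb; intros y Hy; apply EK, Hy).
  assert (G2 : Rbar_le (Glb_Rbar E) (Finite (f ((l + r) / 2)))) by (apply Hlb, Emid).
  assert (L1 : Rbar_le (Lub_Rbar E) (Finite K)) by (apply Hlub; intros y Hy; apply EK, Hy).
  assert (L2 : Rbar_le (Finite (f ((l + r) / 2))) (Lub_Rbar E)) by (apply Hub, Emid).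
  destruct (Glb_Rbar E) as [m| |]; try contradiction.
  destruct (Lub_Rbar E) as [M| |]; try contradiction.
  exists m, M. split; [reflexivity|split; [reflexivity|]]. intros t Ht.
  assert (Et : E (f t)) by (exists t; split; [exact Ht|reflexivity]).
  exact (conj (Hlb _ Et) (Hub _ Et)).
Qed.

Section Signal.

Variables (a b : Rbar) (n : nat) (x : R -> R) (t0 h : R).
Hypotheses (HC : Cn_on (S n) a b x) (Ht0 : in_open_interval a b t0)
  (Ht1 : in_open_interval a b (t0 + h)).

Lemma is_derive_Derive_n_between i c : (i <= n)%nat -> Rmin t0 (t0 + h) <= c <= Rmax t0 (t0 + h) ->
  is_derive (Derive_n x i) c (Derive_n x (S i) c).
Proof.
  intros Hi Hc. apply Derive_correct, (proj1 HC (S i)); [lia|].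
  apply (in_open_interval_between a b t0 (t0 + h)); assumption.
Qed.

Lemma continuous_Derive_n_between c : Rmin t0 (t0 + h) <= c <= Rmax t0 (t0 + h) ->
  continuous (Derive_n x (S n)) c.
Proof. intros Hc. apply (proj2 HC), (in_open_interval_between a b t0 (t0 + h)); assumption. Qed.

Lemma is_derive_Derive_n_affine i s : (i <= n)%nat -> 0 <= s <= 1 ->
  is_derive (fun s => Derive_n x i (t0 + h * s)) s (h * Derive_n x (S i) (t0 + h * s)).
Proof.
  intros Hi Hs. apply (is_derive_comp (Derive_n x i) (fun s => t0 + h * s) s).
  - apply is_derive_Derive_n_between, between_affine; assumption.
  - auto_derive; [easy|ring].
Qed.

Definition rescaled (i : nat) (s : R) : R := h ^ i * Derive_n x i (t0 + h * s).

Lemma is_derive_rescaled i s : (i <= n)%nat -> 0 <= s <= 1 ->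
  is_derive (rescaled i) s (rescaled (S i) s).
Proof.
  intros Hi Hs. unfold rescaled.
  replace (h ^ S i * Derive_n x (S i) (t0 + h * s))
    with (h ^ i * (h * Derive_n x (S i) (t0 + h * s))) by (simpl; ring).
  apply is_derive_scal, is_derive_Derive_n_affine; assumption.
Qed.

Lemma Derive_n_increment_mvt s : 0 < s < 1 -> h <> 0 ->
  exists xi, Rmin t0 (t0 + h) < xi < Rmax t0 (t0 + h)
             /\ Derive_n x n (t0 + h * s) - Derive_n x n t0 = h * s * Derive_n x (S n) xi.
Proof.
  intros Hs Hh.
  assert (Hd : forall c, Rmin t0 (t0 + h) <= c <= Rmax t0 (t0 + h) ->
                 derivable_pt_lim (Derive_n x n) c (Derive_n x (S n) c))
    by (intros; apply is_derive_Reals, is_derive_Derive_n_between; auto).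
  destruct (Rle_dec 0 h) as [hp|hn].
  - rewrite Rmin_left, Rmax_right in * by lra.
    destruct (MVT_cor2 (Derive_n x n) (Derive_n x (S n)) t0 (t0 + h * s)) as [xi [E Hxi]];
      [nra|intros; apply Hd; nra|].
    exists xi. split; [nra|]. rewrite E. ring.
  - rewrite Rmin_right, Rmax_left in * by lra.
    destruct (MVT_cor2 (Derive_n x n) (Derive_n x (S n)) (t0 + h * s) t0) as [xi [E Hxi]];
      [nra|intros; apply Hd; nra|].
    exists xi. split; [nra|]. rewrite <- (Ropp_involutive (_ - _)), Ropp_minus_distr, E. ring.
Qed.

Lemma inf_sup_on_Derive_n_between : h <> 0 ->
  exists m M, inf_on (Derive_n x (S n)) (Rmin t0 (t0 + h)) (Rmax t0 (t0 + h)) = Finite m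
    /\ sup_on (Derive_n x (S n)) (Rmin t0 (t0 + h)) (Rmax t0 (t0 + h)) = Finite M
    /\ forall xi, Rmin t0 (t0 + h) < xi < Rmax t0 (t0 + h) -> m <= Derive_n x (S n) xi <= M.
Proof.
  intros Hh.
  assert (Hlr : Rmin t0 (t0 + h) < Rmax t0 (t0 + h)).
  { destruct (Rle_dec 0 h); [rewrite Rmin_left, Rmax_right|rewrite Rmin_right, Rmax_left]; lra. }
  destruct (continuous_bounded (Derive_n x (S n)) (Rmin t0 (t0 + h)) (Rmax t0 (t0 + h)))
    as [K HK]; [lra|exact continuous_Derive_n_between|].
  apply (inf_sup_on_bounded _ _ _ K Hlr). intros; apply HK; lra.
Qed.

Section Estimator.

Variables kappa mu : R.
Hypotheses (Hk : -1 < kappa) (Hm : -1 < mu) (Hh : h <> 0).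

Let al := INR n + kappa.
Let be := INR n + mu.
Let G (s : R) : R := Derive_n x n (t0 + h * s).
Let J : R := RInt_gen (weighted al be G) (at_right 0) (at_left 1).
Let B : R := RInt_gen (weighted al be (fun _ => 1)) (at_right 0) (at_left 1).

Lemma is_RInt_gen_weighted_Derive_n : is_RInt_gen (weighted al be G) (at_right 0) (at_left 1) J.
Proof.
  assert (HG : forall s, 0 <= s <= 1 -> continuous G s)
    by (intros s Hs; eapply continuous_of_is_derive, is_derive_Derive_n_affine; eauto).
  destruct (continuous_bounded G 0 1) as [K HK]; [lra|exact HG|].
  pose proof (pos_INR n).
  apply (is_RInt_gen_weighted al be K); unfold al, be; try lra; intros s Hs; [apply HG|apply HK]; lra.
Qed.

Lemma jacobi_estimator_weighted_mean : jacobi_estimator n mu kappa h t0 x = J / B.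
Proof.
  pose proof (pos_INR n) as Hn.
  assert (Hfact : INR (Factorial.fact n) <> 0) by apply INR_fact_neq_0.
  assert (Hsign : (-1) ^ n <> 0) by (apply pow_nonzero; lra).
  assert (Hhn : h ^ n <> 0) by (apply pow_nonzero, Hh).
  assert (HB : 0 < B) by (apply RInt_gen_weighted_1_gt_0; unfold al, be; lra).
  assert (Ibp : is_RInt_gen (fun s => Dn_weight al be n s * rescaled 0 s) (at_right 0) (at_left 1)
                  ((-1) ^ n * (h ^ n * J))).
  { apply is_RInt_gen_Dn_weight_ibp; unfold al, be; try lra.
    - intros i s Hi Hs. apply is_derive_rescaled; [lia|exact Hs].
    - intros s Hs. eapply continuous_of_is_derive, is_derive_rescaled; [lia|lra].
    - apply (is_RInt_gen_01_ext (fun s => h ^ n * weighted al be G s)), is_RInt_gen_01_scal,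
        is_RInt_gen_weighted_Derive_n.
      intros s _. unfold weighted, rescaled, G, al, be. ring. }
  assert (EBeta : Beta (kappa + INR n + 1) (mu + INR n + 1) = B).
  { unfold Beta. apply (is_RInt_gen_unique (V:=R_CompleteNormedModule) (Fa:=at_right 0) (Fb:=at_left 1)).
    apply (is_RInt_gen_01_ext (weighted al be (fun _ => 1))); [|apply is_RInt_gen_weighted_1; unfold al, be; lra].
    intros s _. unfold weighted, al, be. replace (kappa + INR n + 1 - 1) with (INR n + kappa) by ring.
    replace (mu + INR n + 1 - 1) with (INR n + mu) by ring. ring. }
  assert (EI : RInt_gen (fun s => jac_weight mu kappa s * jacobiP n mu kappa s * x (t0 + h * s))
                 (at_right 0) (at_left 1) = h ^ n * J / INR (Factorial.fact n)).
  { apply (is_RInt_gen_unique (V:=R_CompleteNormedModule) (Fa:=at_right 0) (Fb:=at_left 1)).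
    replace (h ^ n * J / INR (Factorial.fact n))
      with (/ ((-1) ^ n * INR (Factorial.fact n)) * ((-1) ^ n * (h ^ n * J))) by (field; auto).
    apply (is_RInt_gen_01_ext (fun s => / ((-1) ^ n * INR (Factorial.fact n)) * (Dn_weight al be n s * rescaled 0 s))),
      is_RInt_gen_01_scal, Ibp.
    intros s Hs. unfold al, be. rewrite Dn_weight_rodrigues by exact Hs.
    change (rescaled 0 s) with (1 * x (t0 + h * s)). field. auto. }
  unfold jacobi_estimator. rewrite EBeta, EI. field. split; [lra|auto].
Qed.

Lemma bias_error_between lo hi :
  (forall xi, Rmin t0 (t0 + h) < xi < Rmax t0 (t0 + h) -> h * lo <= h * Derive_n x (S n) xi <= h * hi) ->
  Ccoef n mu kappa h * lo <= bias_error n mu kappa h t0 x <= Ccoef n mu kappa h * hi.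
Proof.
  intros Hbound.
  pose proof (pos_INR n) as Hn.
  set (c := Derive_n x n t0).
  set (B1 := RInt_gen (weighted al be (fun s => s)) (at_right 0) (at_left 1) : R).
  assert (HB : 0 < B) by (apply RInt_gen_weighted_1_gt_0; unfold al, be; lra).
  assert (HB1 : B1 = B * (al + 1) / (al + be + 2)) by (apply RInt_gen_weighted_id; unfold al, be; lra).
  assert (Haffine : forall k, is_RInt_gen (weighted al be (fun s => c * 1 + k * s)) (at_right 0) (at_left 1)
                                (c * B + k * B1)).
  { intros k. apply is_RInt_gen_weighted_lin;
      [apply is_RInt_gen_weighted_1|apply is_RInt_gen_weighted_id]; unfold al, be; lra. }
  assert (HG : forall s, 0 < s < 1 -> c * 1 + lo * h * s <= G s <= c * 1 + hi * h * s).
  { intros s Hs. destruct (Derive_n_increment_mvt s Hs Hh) as [xi [Hxi E]].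
    specialize (Hbound xi Hxi). unfold G, c. split; nra. }
  assert (L : c * B + lo * h * B1 <= J).
  { apply (is_RInt_gen_weighted_le al be _ G _ _ (Haffine (lo * h)) is_RInt_gen_weighted_Derive_n).
    intros; apply HG; auto. }
  assert (U : J <= c * B + hi * h * B1).
  { apply (is_RInt_gen_weighted_le al be G _ _ _ is_RInt_gen_weighted_Derive_n (Haffine (hi * h))).
    intros; apply HG; auto. }
  assert (EC : forall q, Ccoef n mu kappa h * q = q * h * B1 / B).
  { intros q. rewrite HB1. unfold Ccoef, al, be. field. split; lra. }
  unfold bias_error. rewrite jacobi_estimator_weighted_mean, !EC. fold c.
  replace (J / B - c) with ((J - c * B) / B) by (field; lra).
  split; apply Rmult_le_compat_r; try (left; apply Rinv_0_lt_compat, HB); lra.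
Qed.

End Estimator.

End Signal.

Theorem proposition2 (a b : Rbar) (n : nat) (x : R -> R) (kappa mu t0 T : R) :
  Rbar_lt a b ->
  Cn_on (S n) a b x ->
  -1 < kappa -> -1 < mu ->
  in_open_interval a b t0 -> 0 < T ->
  (in_open_interval a b (t0 + T) ->
     Rbar_le (Rbar_mult (Ccoef n mu kappa T) (inf_on (Derive_n x (S n)) t0 (t0 + T)))
             (bias_error n mu kappa T t0 x)
     /\ Rbar_le (bias_error n mu kappa T t0 x)
             (Rbar_mult (Ccoef n mu kappa T) (sup_on (Derive_n x (S n)) t0 (t0 + T))))
  /\
  (in_open_interval a b (t0 - T) ->
     Rbar_le (Rbar_mult (Ccoef n mu kappa (- T)) (sup_on (Derive_n x (S n)) (t0 - T) t0))
             (bias_error n mu kappa (- T) t0 x)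
     /\ Rbar_le (bias_error n mu kappa (- T) t0 x)
             (Rbar_mult (Ccoef n mu kappa (- T)) (inf_on (Derive_n x (S n)) (t0 - T) t0))).
Proof.
  (* [Rbar_lt a b] is implied by [in_open_interval a b t0]. *)
  intros _ HC Hk Hm Ht0 HT. split; intros Ht1.
  - destruct (inf_sup_on_Derive_n_between a b n x t0 T HC Ht0 Ht1) as (m & M & Em & EM & HmM); [lra|].
    rewrite Rmin_left, Rmax_right in Em, EM, HmM by lra. rewrite Em, EM.
    apply (bias_error_between a b n x t0 T HC Ht0 Ht1 kappa mu Hk Hm); [lra|].
    rewrite Rmin_left, Rmax_right by lra. intros xi Hxi. specialize (HmM xi Hxi). split; nra.
  - replace (t0 - T) with (t0 + - T) in * by ring.
    destruct (inf_sup_on_Derive_n_between a b n x t0 (- T) HC Ht0 Ht1) as (m & M & Em & EM & HmM); [lra|].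
    rewrite Rmin_right, Rmax_left in Em, EM, HmM by lra. rewrite Em, EM.
    apply (bias_error_between a b n x t0 (- T) HC Ht0 Ht1 kappa mu Hk Hm); [lra|].
    rewrite Rmin_right, Rmax_left by lra. intros xi Hxi. specialize (HmM xi Hxi). split; nra.
Qed.
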